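(* Let $m\ge1$ and $y\in\mathbb{R}^{2m+1}_+$. Then $$\min_{x\in\mathbb{R}^{m+1}_+}\mathcal{I}(y\|x*x)=\min_{\mathbf{Y}\in\boldsymbol{\mathcal{Y}},\,\mathbf{W}\in\boldsymbol{\mathcal{W}}}\mathcal{I}(\mathbf{Y}\|\mathbf{W}).$$
   Context: For $x\in\mathbb{R}^{m+1}$ set $x_k=0$ for $k<0$, $k>m$, and $(x*x)_i=\sum_{j=0}^i x_{i-j}x_j$, $i=0,\dots,2m$. Matrices are indexed by rows $i=0,\dots,2m$ and columns $j=0,\dots,m$. $\boldsymbol{\mathcal{Y}}$ is the set of $\mathbf{Y}\in\mathbb{R}^{(2m+1)\times(m+1)}_+$ with $\mathbf{Y}_{ij}=0$ for $i<j$ and $i>j+m$ and with row sums $\sum_j\mathbf{Y}_{ij}=y_i$. $\boldsymbol{\mathcal{W}}$ is the set of matrices with $\mathbf{W}_{ij}=x_{i-j}x_j$ for $0\le j\le m$, $j\le i\le j+m$, and $\mathbf{W}_{ij}=0$ otherwise, for some $x\in\mathbb{R}^{m+1}_+$. For nonnegative arrays $M,N$ of the same size, $\mathcal{I}(M\|N)=\sum\big(M\log\frac{M}{N}-M+N\big)$ entrywise summed (convention $0\log0=0$; $+\infty$ if some entry has $M>0=N$). *)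

From HB Require Import structures.
From mathcomp Require Import all_boot all_order all_algebra.
From mathcomp Require Import all_classical all_reals exp.
From mathcomp Require Import ereal.
Set Implicit Arguments. Unset Strict Implicit. Unset Printing Implicit Defensive.
Import Order.TTheory GRing.Theory Num.Theory.
Local Open Scope ring_scope.

Section Defs.
Variable R : realType.

Definition xext (m : nat) (x : 'I_m.+1 -> R) (k : nat) : R :=
  if (k < m.+1)%N then x (inord k) else 0.

Definition selfconv (m : nat) (x : 'I_m.+1 -> R) (i : 'I_(2 * m).+1) : R :=
  \sum_(j < i.+1) xext x (i - j) * xext x j.

(* one entry of I(M||N): M log(M/N) - M + N, with 0 log 0 = 0,
   and +oo if M > 0 = N (entries assumed nonnegative) *)
Definition idiv_term (a b : R) : \bar R :=
  if a == 0 then b%:E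
  else if b == 0 then +oo%E
  else (a * ln (a / b) - a + b)%:E.

Definition idiv_vec (n : nat) (M N : 'I_n -> R) : \bar R :=
  (\sum_(i < n) idiv_term (M i) (N i))%E.

Definition idiv_mx (p q : nat) (M N : 'M[R]_(p, q)) : \bar R :=
  (\sum_(i < p) \sum_(j < q) idiv_term (M i j) (N i j))%E.

Definition in_calY (m : nat) (y : 'I_(2 * m).+1 -> R)
  (Y : 'M[R]_((2 * m).+1, m.+1)) : Prop :=
  (forall i j, 0 <= Y i j) /\
  (forall (i : 'I_(2 * m).+1) (j : 'I_m.+1),
      ((i < j)%N \/ (j + m < i)%N) -> Y i j = 0) /\
  (forall i, \sum_(j < m.+1) Y i j = y i).

Definition in_calW (m : nat) (W : 'M[R]_((2 * m).+1, m.+1)) : Prop :=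
  exists x : 'I_m.+1 -> R, (forall k, 0 <= x k) /\
    forall (i : 'I_(2 * m).+1) (j : 'I_m.+1),
      W i j = if ((j <= i) && (i <= j + m))%N
              then xext x (i - j) * x j else 0.
End Defs.

(* For W in 𝒲 built from x, the rows of W sum to x*x, so the log-sum inequality
   applied row by row gives I(y || x*x) <= I(Y || W) for every Y in 𝒴, with
   equality for Y_ij = y_i W_ij / (x*x)_i.  Both minima therefore agree as soon
   as the left one is attained.  It is: I(y || x*x) exceeds its value at x = 1
   when some x_k is large (as (x*x)_2k >= x_k^2) or when some (x*x)_i with
   y_i > 0 is small, so one minimises a continuous function on a compact set. *)

From HB Require Import structures.
From mathcomp Require Import all_boot all_order all_algebra.
From mathcomp Require Import all_classical all_reals exp.
From mathcomp Require Import ereal.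
From mathcomp Require Import topology normedtype sequences derive.
From mathcomp Require Import ring lra zify.
Import Order.TTheory GRing.Theory Num.Theory.
Import numFieldTopology.Exports numFieldNormedType.Exports.
Set Implicit Arguments. Unset Strict Implicit.
Local Open Scope ring_scope.

Section SumTerm.
Variable R : realDomainType.

Lemma ler_sum_term (p : nat) (F : 'I_p -> R) j : (forall i, 0 <= F i) -> F j <= \sum_i F i.
Proof. by move=> F0; rewrite (bigD1 j) //= lerDl sumr_ge0. Qed.

Lemma lee_sum_term (p : nat) (F : 'I_p -> \bar R) j : (forall i, 0 <= F i)%E ->
  (F j <= \sum_i F i)%E.
Proof. by move=> F0; rewrite (bigD1 j) //= leeDl // sume_ge0. Qed.

End SumTerm.

Lemma continuous_at_sum (R : realType) (T : topologicalType) (p : nat)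
    (f : 'I_p -> T -> R) x :
  (forall i, {for x, continuous (f i)}) -> {for x, continuous (fun t => \sum_i f i t)}.
Proof. by move=> fc; apply: (cvg_big add_continuous) => // i _; exact: fc. Qed.

Section IDivergence.
Variable R : realType.
Implicit Types (a b c M : R).

Lemma ln_le_subr1 (u : R) : 0 < u -> ln u <= u - 1.
Proof. by move=> u0; have := @le_ln1Dx R (u - 1); rewrite [1 + _]addrC subrK; apply; lra. Qed.

(* Equality holds at c = a / b, which makes this the variational form of I. *)
Lemma idiv_term_ge_variational a b c : 0 < c -> 0 <= a -> 0 <= b ->
  ((a * ln c - b * c + b)%:E <= idiv_term a b)%E.
Proof.
move=> c0 a0 b0; rewrite /idiv_term.
have [->|an] := eqVneq a 0.
  by rewrite mul0r sub0r lee_fin; have := mulr_ge0 b0 (ltW c0); lra.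
have [->|bn] := eqVneq b 0; first by rewrite leey.
have ap : 0 < a by rewrite lt_def an.
have bp : 0 < b by rewrite lt_def bn.
pose v := b * c / a.
have vp : 0 < v by rewrite divr_gt0 ?mulr_gt0.
have abv : a / b = c / v by rewrite /v; field; rewrite !gt_eqF.
have av : a * v = b * c by rewrite /v; field; rewrite gt_eqF.
rewrite lee_fin abv ln_div ?posrE //.
have : a * ln v <= a * (v - 1) by rewrite ler_pM2l // ln_le_subr1.
rewrite !mulrBr mulr1; lra.
Qed.

Lemma idiv_term_ge0 a b : 0 <= a -> 0 <= b -> (0 <= idiv_term a b)%E.
Proof.
move=> a0 b0; apply: le_trans (idiv_term_ge_variational ltr01 a0 b0).
by rewrite ln1 mulr0 mulr1 sub0r addNr.
Qed.

Lemma sum_idiv_variational (p : nat) (u w : 'I_p -> R) :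
  let a := \sum_j u j in let b := \sum_j w j in a != 0 -> b != 0 ->
  (\sum_j (u j * ln (a / b) - w j * (a / b) + w j)%:E)%E = idiv_term a b.
Proof.
move=> a b an bn; rewrite sumEFin /idiv_term (negbTE an) (negbTE bn).
rewrite !big_split /= sumrN -!mulr_suml -/a -/b.
by congr (_%:E); field.
Qed.

Lemma idiv_term_sum_le (p : nat) (u w : 'I_p -> R) :
  (forall j, 0 <= u j) -> (forall j, 0 <= w j) ->
  (idiv_term (\sum_j u j) (\sum_j w j) <= \sum_j idiv_term (u j) (w j))%E.
Proof.
move=> u0 w0; set a := \sum_j u j; set b := \sum_j w j.
have a0 : 0 <= a by apply: sumr_ge0.
have b0 : 0 <= b by apply: sumr_ge0.
have [ae|an] := eqVneq a 0.
  have uz j : u j = 0 by apply: (psumr_eq0P (P := xpredT) (fun i _ => u0 i)).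
  rewrite ae /idiv_term eqxx -sumEFin.
  by apply: lee_sum => j _; rewrite uz eqxx.
have [be|bn] := eqVneq b 0.
  have wz j : w j = 0 by apply: (psumr_eq0P (P := xpredT) (fun i _ => w0 i)).
  have [j /= uj] := psumr_neq0P (P := xpredT) (fun i _ => u0 i) (elimN eqP an).
  have uwj : idiv_term (u j) (w j) = +oo%E by rewrite /idiv_term gt_eqF // wz eqxx.
  rewrite (bigD1 j) //= uwj addye ?leey // -ltNye (lt_le_trans ltNy0) //.
  by apply: sume_ge0 => i _; exact: idiv_term_ge0.
rewrite -(sum_idiv_variational an bn); apply: lee_sum => j _.
by apply: idiv_term_ge_variational => //; rewrite divr_gt0 // lt_def ?an ?bn.
Qed.

Lemma idiv_term_sum_proportional (p : nat) a (w : 'I_p -> R) :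
  let b := \sum_j w j in 0 <= a -> (forall j, 0 <= w j) -> (a != 0 -> b != 0) ->
  \sum_j idiv_term (if b == 0 then 0 else a * w j / b) (w j) = idiv_term a b.
Proof.
move=> b a0 w0 ab.
have [->|an] := eqVneq a 0.
  rewrite /idiv_term eqxx -sumEFin; apply: eq_bigr => j _.
  by rewrite mul0r mul0r if_same eqxx.
have bn := ab an; have b0 : 0 <= b by apply: sumr_ge0.
have ap : 0 < a by rewrite lt_def an.
have bp : 0 < b by rewrite lt_def bn.
have ua : \sum_j (a * w j / b) = a by rewrite -mulr_suml -mulr_sumr -/b; field.
have := sum_idiv_variational (u := fun j => a * w j / b) (w := w); rewrite /= ua -/b => <- //.
rewrite (negbTE bn).
apply: eq_bigr => j _; rewrite /idiv_term.
have [->|wn] := eqVneq (w j) 0; first by rewrite mulr0 mul0r eqxx; congr (_%:E); ring.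
have wp : 0 < w j by rewrite lt_def wn w0.
rewrite gt_eqF ?divr_gt0 ?mulr_gt0 //; congr (_%:E).
have -> : a * w j / b / w j = a / b by field; rewrite !gt_eqF.
ring.
Qed.

Definition idiv_real a b : R := if a == 0 then b else a * ln (a / b) - a + b.

Lemma idiv_termE a b : (a != 0 -> b != 0) -> idiv_term a b = (idiv_real a b)%:E.
Proof. by rewrite /idiv_term /idiv_real; case: eqP => // _ /(_ isT) /negbTE ->. Qed.

Lemma idiv_real_continuous a b : 0 <= a -> (a != 0 -> 0 < b) ->
  {for b, continuous (idiv_real a)}.
Proof.
rewrite /idiv_real le_eqVlt eq_sym; case: eqP => [_ _ _|_ /= ap /(_ isT) bp].
  exact: cvg_id.
have div_cont : {for b, continuous (fun t : R => a / t)}.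
  apply: continuousM; first exact: cvg_cst.
  by apply: continuousV; [rewrite gt_eqF | exact: cvg_id].
have ln_cont : {for b, continuous (fun t : R => ln (a / t))}.
  by apply: continuous_comp div_cont _; apply: continuous_ln; rewrite divr_gt0.
apply: continuousD; last exact: cvg_id.
apply: continuousB; last exact: cvg_cst.
by apply: continuousM; [exact: cvg_cst | exact: ln_cont].
Qed.

Lemma idiv_term_gt_large a b M : 0 <= a -> 0 <= M -> 2 * (M + a) < b ->
  (M%:E < idiv_term a b)%E.
Proof.
move=> a0 M0 ab; have half_gt0 : 0 < 2^-1 :> R by rewrite invr_gt0.
apply: lt_le_trans (idiv_term_ge_variational half_gt0 a0 _); last lra.
have ln2 : ln 2 <= 1 :> R by have := ln_le_subr1 (ltr0Sn R 1); lra.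
have : a * ln 2 <= a :> R by rewrite -[leRHS]mulr1; apply: ler_wpM2l.
rewrite lte_fin lnV ?posrE //; lra.
Qed.

Lemma idiv_term_gt_small a b M : 0 < a -> 0 <= b -> b < a / expR (M / a + 1) ->
  (M%:E < idiv_term a b)%E.
Proof.
move=> ap b0 ba; rewrite /idiv_term gt_eqF //.
case: eqP => [_|/eqP bn]; first by rewrite ltey.
have bp : 0 < b by rewrite lt_def bn.
have : a * (M / a + 1) < a * ln (a / b).
  rewrite ltr_pM2l // -ltr_expR lnK ?posrE ?divr_gt0 //.
  by rewrite ltr_pdivlMr // mulrC -ltr_pdivlMr ?expR_gt0.
rewrite mulrDr mulr1 mulrCA divff ?gt_eqF // mulr1 lte_fin; lra.
Qed.

End IDivergence.

Section RowCoupling.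
Variables (R : realType) (p q : nat).
Implicit Types (Y W : 'M[R]_(p, q)) (a : 'I_p -> R).

Definition rowsum (M : 'M[R]_(p, q)) (i : 'I_p) : R := \sum_j M i j.

Definition scale_rows a W : 'M[R]_(p, q) :=
  \matrix_(i, j) if rowsum W i == 0 then 0 else a i * W i j / rowsum W i.

Lemma idiv_vec_rowsum_le Y W : (forall i j, 0 <= Y i j) -> (forall i j, 0 <= W i j) ->
  (idiv_vec (rowsum Y) (rowsum W) <= idiv_mx Y W)%E.
Proof. by move=> Y0 W0; apply: lee_sum => i _; exact: idiv_term_sum_le. Qed.

Lemma idiv_mx_scale_rows a W : (forall i, 0 <= a i) -> (forall i j, 0 <= W i j) ->
  (forall i, a i != 0 -> rowsum W i != 0) ->
  idiv_mx (scale_rows a W) W = idiv_vec a (rowsum W).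
Proof.
move=> a0 W0 aW; apply: eq_bigr => i _.
under eq_bigr do rewrite mxE.
exact: (idiv_term_sum_proportional (a0 i) (W0 i) (aW i)).
Qed.

Lemma rowsum_scale_rows a W : (forall i, a i != 0 -> rowsum W i != 0) ->
  rowsum (scale_rows a W) = a.
Proof.
move=> aW; apply/funext => i; rewrite /rowsum; under eq_bigr do rewrite mxE.
have [Wi0|Win0] := eqVneq (rowsum W i) 0.
  rewrite big1_eq; apply/eqP; rewrite eq_sym.
  by apply: contraTT (aW i) _; apply/eqP.
by rewrite -mulr_suml -mulr_sumr -/(rowsum W i); field.
Qed.

Lemma scale_rows_ge0 a W : (forall i, 0 <= a i) -> (forall i j, 0 <= W i j) ->
  forall i j, 0 <= scale_rows a W i j.
Proof.
move=> a0 W0 i j; rewrite mxE; case: eqP => // _.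
by rewrite divr_ge0 ?mulr_ge0 ?sumr_ge0.
Qed.

End RowCoupling.

Section Convolution.
Variables (R : realType) (m : nat).
Implicit Types (x : 'I_m.+1 -> R) (y : 'I_(2 * m).+1 -> R).

Definition conv_mx x : 'M[R]_((2 * m).+1, m.+1) :=
  \matrix_(i, j) if ((j <= i) && (i <= j + m))%N then xext x (i - j) * x j else 0.

Lemma xext_ord x (j : 'I_m.+1) : xext x j = x j.
Proof. by rewrite /xext ltn_ord inord_val. Qed.

Lemma xext_out x k : (m < k)%N -> xext x k = 0.
Proof. by move=> mk; rewrite /xext ltnNge mk. Qed.

Lemma xext_ge0 x : (forall k, 0 <= x k) -> forall k, 0 <= xext x k.
Proof. by move=> x0 k; rewrite /xext; case: ifP. Qed.

Lemma selfconv_ge0 x : (forall k, 0 <= x k) -> forall i, 0 <= selfconv x i.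
Proof. by move=> x0 i; apply: sumr_ge0 => j _; rewrite mulr_ge0 ?xext_ge0. Qed.

Lemma conv_mx_ge0 x : (forall k, 0 <= x k) -> forall i j, 0 <= conv_mx x i j.
Proof. by move=> x0 i j; rewrite mxE; case: ifP; rewrite ?mulr_ge0 ?xext_ge0. Qed.

Lemma in_calW_conv_mx x : (forall k, 0 <= x k) -> in_calW (conv_mx x).
Proof. by move=> x0; exists x; split => // i j; rewrite mxE. Qed.

Lemma in_calWP W : in_calW W -> exists2 x, (forall k, 0 <= x k) & W = conv_mx x.
Proof. by case=> x [x0 Wx]; exists x => //; apply/matrixP => i j; rewrite Wx mxE. Qed.

Lemma rowsum_conv_mx x : rowsum (conv_mx x) = selfconv x.
Proof.
apply/funext => i; have ltim := ltn_ord i.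
pose e j := xext x (i - j) * xext x j.
pose band j := if ((j <= i) && (i <= j + m))%N then e j else 0.
have -> : rowsum (conv_mx x) i = \sum_(j < m.+1) band j.
  by apply: eq_bigr => j _; rewrite mxE /band /e xext_ord.
rewrite /selfconv (big_ord_widen (2 * m).+1 band) ?(big_ord_widen (2 * m).+1 e); try lia.
rewrite big_mkcond [RHS]big_mkcond; apply: eq_bigr => j _ /=.
rewrite /band /e !ltnS; case: (leqP j m) => jm; case: (leqP j i) => ji //=.
- by case: leqP => // ijm; rewrite xext_out ?mul0r //; lia.
- by rewrite (xext_out x jm) mulr0.
Qed.

Lemma scale_rows_conv_mx_in_calY y x : (forall i, 0 <= y i) -> (forall k, 0 <= x k) ->
  (forall i, y i != 0 -> selfconv x i != 0) -> in_calY y (scale_rows y (conv_mx x)).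
Proof.
move=> y0 x0 yx; rewrite -rowsum_conv_mx in yx; split; last split.
- exact: scale_rows_ge0 (conv_mx_ge0 x0).
- move=> i j out; have Wij : conv_mx x i j = 0 by rewrite mxE ifF //; lia.
  by rewrite mxE Wij mulr0 mul0r if_same.
- by move=> i; have /(congr1 (fun f => f i)) := rowsum_scale_rows yx.
Qed.

End Convolution.

Section Minimizer.
Variables (R : realType) (m : nat) (y : 'I_(2 * m).+1 -> R).
Hypothesis y0 : forall i, 0 <= y i.
Local Notation X := {ptws 'I_m.+1 -> R}.
Local Open Scope classical_set_scope.

Lemma selfconv_sq (x : 'I_m.+1 -> R) (k : 'I_m.+1) : (forall k, 0 <= x k) ->
  x k * x k <= selfconv x (inord (2 * k)).
Proof.
move=> x0; have k2m : (2 * k < (2 * m).+1)%N by have := ltn_ord k; lia.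
have kk : (k < (2 * k).+1)%N by lia.
rewrite /selfconv inordK //; apply: le_trans (ler_sum_term (Ordinal kk) _) => /=.
  by rewrite (_ : 2 * k - k = k)%N ?xext_ord //; lia.
by move=> j; rewrite mulr_ge0 ?xext_ge0.
Qed.

Lemma selfconv_ones_gt0 i : 0 < selfconv (fun _ : 'I_m.+1 => 1 : R) i.
Proof.
have im : (i - m < i.+1)%N by lia.
apply: lt_le_trans (ler_sum_term (Ordinal im) _) => /=.
  by rewrite /xext !ifT ?mulr1 //; have := ltn_ord i; lia.
by move=> j; rewrite mulr_ge0 // /xext; case: ifP.
Qed.

Lemma selfconv_continuous i : continuous (fun x : X => selfconv x i).
Proof.
have xext_continuous k : continuous (fun x : X => xext x k).
  by rewrite /xext; case: (k < m.+1)%N; [exact: proj_continuous | exact: cst_continuous].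
apply: (continuous_big add_continuous) => j _ x.
exact: (continuousM (xext_continuous _ x) (xext_continuous _ x)).
Qed.

Definition idiv_selfconv (x : 'I_m.+1 -> R) : R := \sum_i idiv_real (y i) (selfconv x i).

Lemma idiv_vec_selfconvE x : (forall i, y i != 0 -> selfconv x i != 0) ->
  idiv_vec y (selfconv x) = (idiv_selfconv x)%:E.
Proof.
by move=> yx; rewrite /idiv_vec -sumEFin; apply: eq_bigr => i _; rewrite (idiv_termE (yx i)).
Qed.

Let M1 := idiv_selfconv (fun _ => 1).

Let idiv_ones : idiv_vec y (selfconv (fun _ => 1)) = M1%:E.
Proof. by rewrite idiv_vec_selfconvE // => i _; rewrite gt_eqF ?selfconv_ones_gt0. Qed.

Let M1_ge0 : 0 <= M1.
Proof.
rewrite -lee_fin -idiv_ones; apply: sume_ge0 => i _.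
by rewrite idiv_term_ge0 ?selfconv_ge0.
Qed.

(* The constants make I(y || x*x) exceed its value at x = 1 off this set, and
   the lower bounds on (x*x)_i make I finite and continuous on it. *)
Definition sublevel_box : set X :=
  [set x : X | forall k : 'I_m.+1, `[0, 2 * (M1 + y (inord (2 * k))) + 1] (x k)] `&`
  [set x : X | forall i, y i != 0 -> y i / expR (M1 / y i + 1) <= selfconv x i].

Lemma idiv_gt_outside_box x : (forall k, 0 <= x k) -> ~ sublevel_box x ->
  (M1%:E < idiv_vec y (selfconv x))%E.
Proof.
move=> x0 /not_andP[/existsNP[k]|/existsNP[i /not_implyP[yi]]].
  rewrite /= in_itv /= x0 /= => /negP; rewrite -ltNge => xk.
  apply: lt_le_trans (lee_sum_term (inord (2 * k)) _); last first.
    by move=> j; rewrite idiv_term_ge0 ?selfconv_ge0.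
  apply: idiv_term_gt_large => //; apply: lt_le_trans (selfconv_sq k x0).
  have := y0 (inord (2 * k)); nra.
move=> /negP; rewrite -ltNge => small.
apply: lt_le_trans (lee_sum_term i _); last first.
  by move=> j; rewrite idiv_term_ge0 ?selfconv_ge0.
by apply: idiv_term_gt_small small; rewrite ?selfconv_ge0 // lt_def yi y0.
Qed.

Let ones_in_box : sublevel_box (fun _ => 1).
Proof.
apply: contrapT => out; have := idiv_gt_outside_box (fun _ => ler01) out.
by rewrite idiv_ones ltxx.
Qed.

Let box_pos x i : sublevel_box x -> y i != 0 -> 0 < selfconv x i.
Proof.
move=> [_ xS] yi; apply: lt_le_trans (xS i yi).
by rewrite divr_gt0 ?expR_gt0 // lt_def yi y0.
Qed.

Lemma compact_sublevel_box : compact sublevel_box.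
Proof.
apply: compact_closedI.
  have := @tychonoff 'I_m.+1 (fun=> R) _ (fun k => @segment_compact R 0
    (2 * (M1 + y (inord (2 * k))) + 1)).
  exact.
have -> : [set x : X | forall i, y i != 0 -> y i / expR (M1 / y i + 1) <= selfconv x i] =
    \bigcap_(i in [set i | y i != 0])
       ((fun x : X => selfconv x i) @^-1` [set r | y i / expR (M1 / y i + 1) <= r]).
  by apply/seteqP; split => x /= xS i; exact: xS.
apply: closed_bigI => i _.
by apply: (continuous_closedP _).1; [exact: selfconv_continuous | exact: closed_ge].
Qed.

Lemma continuous_idiv_selfconv : {within sublevel_box, continuous (idiv_selfconv : X -> R)}.
Proof.
apply: continuous_in_subspaceT => x; rewrite inE => xS.
apply: continuous_at_sum => i.
apply: (@continuous_comp _ _ _ (fun t : X => selfconv t i)).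
  exact: selfconv_continuous.
by apply: idiv_real_continuous => // /box_pos; exact.
Qed.

Lemma exists_idiv_selfconv_min : exists2 x : 'I_m.+1 -> R,
  (forall k, 0 <= x k) /\ (forall i, y i != 0 -> selfconv x i != 0) &
  forall x', (forall k, 0 <= x' k) ->
    (idiv_vec y (selfconv x) <= idiv_vec y (selfconv x'))%E.
Proof.
have [|x xS xmin] := compact_EVT_min _ compact_sublevel_box continuous_idiv_selfconv.
  by exists (fun _ => 1).
rewrite inE in xS.
have xpos i : y i != 0 -> selfconv x i != 0 by move=> yi; rewrite gt_eqF ?box_pos.
exists x.
  by split=> // k; have [/(_ k)] := xS; rewrite /= in_itv => /andP[].
move=> x' x'0; rewrite idiv_vec_selfconvE //.
have [x'S|x'S] := pselect (sublevel_box x').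
  rewrite idiv_vec_selfconvE ?lee_fin ?xmin ?inE // => i yi.
  by rewrite gt_eqF ?box_pos.
apply/ltW; apply: le_lt_trans (idiv_gt_outside_box x'0 x'S).
by rewrite lee_fin; apply: xmin; rewrite inE; exact: ones_in_box.
Qed.

End Minimizer.

Theorem proposition3 (R : realType) (m : nat) (hm : (1 <= m)%N)
  (y : 'I_(2 * m).+1 -> R) (hy : forall i, 0 <= y i) :
  exists x : 'I_m.+1 -> R,
    (forall k, 0 <= x k) /\
    (forall x' : 'I_m.+1 -> R, (forall k, 0 <= x' k) ->
       (idiv_vec y (selfconv x) <= idiv_vec y (selfconv x'))%E) /\
    exists Y W : 'M[R]_((2 * m).+1, m.+1),
      in_calY y Y /\ in_calW W /\
      (forall Y' W' : 'M[R]_((2 * m).+1, m.+1),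
         in_calY y Y' -> in_calW W' -> (idiv_mx Y W <= idiv_mx Y' W')%E) /\
      idiv_vec y (selfconv x) = idiv_mx Y W.
Proof.
have [x [x0 xpos] xmin] := exists_idiv_selfconv_min hy.
have YxWx : idiv_mx (scale_rows y (conv_mx x)) (conv_mx x) = idiv_vec y (selfconv x).
  by rewrite idiv_mx_scale_rows ?rowsum_conv_mx //; exact: conv_mx_ge0.
exists x; split => //; split => //.
exists (scale_rows y (conv_mx x)), (conv_mx x); rewrite YxWx.
split; first exact: scale_rows_conv_mx_in_calY.
split; first exact: in_calW_conv_mx.
split => // Y' W' [Y'0 [_ Y'y]] /in_calWP [x' x'0 ->].
apply: le_trans (xmin x' x'0) _.
have <- : rowsum Y' = y by apply/funext.
by rewrite -rowsum_conv_mx; apply: idiv_vec_rowsum_le => //; exact: conv_mx_ge0.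
Qed.
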